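(* For every message $M$ and formula $\phi$: $\vdash\mathsf{k}_{\mathsf{CM}}(M)\to([M]\phi\leftrightarrow\phi)$.
   Context: Fix a finite set $\mathcal{A}$ of agent names containing a distinguished name $\mathsf{CM}$. Messages: $M ::= a \mid B \mid (M,M)$ ($a\in\mathcal{A}$, $B$ optional data constants, pairs). $\mathcal{P}$ is a denumerable set of propositional variables containing atoms $\mathsf{k}_a(M)$ (''$a$ knows $M$''). Formulas: $\phi ::= P \mid \phi\wedge\phi \mid \phi\vee\phi \mid \neg\phi \mid \phi\to\phi \mid [M]\phi$. Abbreviations: $\mathrm{true}:=\mathsf{k}_{\mathsf{CM}}(\mathsf{CM})$, $\mathrm{false}:=\neg\mathrm{true}$, $\phi\leftrightarrow\psi:=(\phi\to\psi)\wedge(\psi\to\phi)$, $\langle M\rangle\phi:=\neg\neg(\mathsf{k}_{\mathsf{CM}}(M)\wedge\phi)$. LIiP is the smallest set of formulas containing all instances of: the axioms of an adequate Hilbert axiomatization of intuitionistic propositional logic; $\mathsf{k}_a(a)$; $(\mathsf{k}_a(M)\wedge\mathsf{k}_a(M'))\leftrightarrow\mathsf{k}_a((M,M'))$; $[M]\mathsf{k}_{\mathsf{CM}}(M)$; $[M](\phi\to\psi)\to([M]\phi\to[M]\psi)$; $[M]\phi\to(\mathsf{k}_{\mathsf{CM}}(M)\to\phi)$; $[M]\phi\to\langle M\rangle\phi$; $\phi\to[M]\phi$; and closed under modus ponens and the rule: if $\mathsf{k}_{\mathsf{CM}}(M)\to\mathsf{k}_{\mathsf{CM}}(M')$ is in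 the set then so is $[M']\phi\to[M]\phi$ for every $\phi$. Write $\vdash\phi$ for $\phi\in\mathrm{LIiP}$. *)

From mathcomp Require Import ssreflect ssrbool eqtype fintype.

Set Implicit Arguments.

Section LIiP.

Variable Agent : finType.
Variable Data : Type.
Variable CM : Agent.

Inductive msg : Type :=
| MAgent : Agent -> msg
| MData : Data -> msg
| MPair : msg -> msg -> msg.

(* Denumerable set of propositional variables: the knowledge atoms k_a(M)
   together with countably many further variables. *)
Inductive pvar : Type :=
| PK : Agent -> msg -> pvar
| PV : nat -> pvar.

Inductive form : Type :=
| FVar : pvar -> form
| FAnd : form -> form -> form
| FOr : form -> form -> form
| FNot : form -> form
| FImp : form -> form -> form
| FBox : msg -> form -> form.

Definition Fk (a : Agent) (M : msg) : form := FVar (PK a M).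
Definition Ftrue : form := Fk CM (MAgent CM).
Definition Ffalse : form := FNot Ftrue.
Definition Fiff (p q : form) : form := FAnd (FImp p q) (FImp q p).
Definition Fdia (M : msg) (p : form) : form := FNot (FNot (FAnd (Fk CM M) p)).

(* LIiP: intuitionistic propositional logic given by Kleene's Hilbert
   system (negation primitive) plus the specific axioms and rules. *)
Inductive LIiP : form -> Prop :=
| ax_K : forall p q, LIiP (FImp p (FImp q p))
| ax_S : forall p q r,
    LIiP (FImp (FImp p q) (FImp (FImp p (FImp q r)) (FImp p r)))
| ax_andI : forall p q, LIiP (FImp p (FImp q (FAnd p q)))
| ax_andE1 : forall p q, LIiP (FImp (FAnd p q) p)
| ax_andE2 : forall p q, LIiP (FImp (FAnd p q) q)
| ax_orI1 : forall p q, LIiP (FImp p (FOr p q))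
| ax_orI2 : forall p q, LIiP (FImp q (FOr p q))
| ax_orE : forall p q r,
    LIiP (FImp (FImp p r) (FImp (FImp q r) (FImp (FOr p q) r)))
| ax_notI : forall p q,
    LIiP (FImp (FImp p q) (FImp (FImp p (FNot q)) (FNot p)))
| ax_efq : forall p q, LIiP (FImp (FNot p) (FImp p q))
| ax_kself : forall a, LIiP (Fk a (MAgent a))
| ax_kpair : forall a M M',
    LIiP (Fiff (FAnd (Fk a M) (Fk a M')) (Fk a (MPair M M')))
| ax_boxk : forall M, LIiP (FBox M (Fk CM M))
| ax_boxK : forall M p q,
    LIiP (FImp (FBox M (FImp p q)) (FImp (FBox M p) (FBox M q)))
| ax_boxT : forall M p, LIiP (FImp (FBox M p) (FImp (Fk CM M) p))
| ax_boxD : forall M p, LIiP (FImp (FBox M p) (Fdia M p))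
| ax_boxI : forall M p, LIiP (FImp p (FBox M p))
| r_mp : forall p q, LIiP (FImp p q) -> LIiP p -> LIiP q
| r_mono : forall M M' p,
    LIiP (FImp (Fk CM M) (Fk CM M')) ->
    LIiP (FImp (FBox M' p) (FBox M p)).

End LIiP.

From mathcomp Require Import ssreflect ssrbool eqtype fintype.

(* Under k_CM(M), axiom [M]phi -> (k_CM(M) -> phi) gives [M]phi -> phi once its
   antecedents are swapped, and the converse is axiom phi -> [M]phi weakened by
   the hypothesis k_CM(M); only the implicational fragment of IPC is needed. *)

Section HilbertCalculus.

Variables (Agent : finType) (Data : Type) (CM : Agent).

Local Notation "|- p" := (LIiP CM p) (at level 70).

Implicit Types p q r : form Agent Data.

Lemma LIiP_mp_under {p q r} :
  |- FImp p q -> |- FImp p (FImp q r) -> |- FImp p r.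
Proof. by move=> pq pqr; apply: r_mp pqr; apply: r_mp pq; apply: ax_S. Qed.

Lemma LIiP_weaken p q : |- q -> |- FImp p q.
Proof. by move=> hq; apply: r_mp hq; apply: ax_K. Qed.

Lemma LIiP_imp_swap p q r :
  |- FImp p (FImp q r) -> |- FImp q (FImp p r).
Proof.
move=> pqr.
have q_pq : |- FImp q (FImp p q) := ax_K _ _ _.
have q_pqr : |- FImp q (FImp p (FImp q r)) by apply: LIiP_weaken.
have q_S : |- FImp q (FImp (FImp p q) (FImp (FImp p (FImp q r)) (FImp p r))).
  by apply: LIiP_weaken; apply: ax_S.
exact: LIiP_mp_under q_pqr (LIiP_mp_under q_pq q_S).
Qed.

Lemma LIiP_imp_and p q r :
  |- FImp p q -> |- FImp p r -> |- FImp p (FAnd q r).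
Proof.
move=> pq pr.
have p_andI : |- FImp p (FImp q (FImp r (FAnd q r))).
  by apply: LIiP_weaken; apply: ax_andI.
exact: LIiP_mp_under pr (LIiP_mp_under pq p_andI).
Qed.

End HilbertCalculus.

Theorem theorem2p10 (Agent : finType) (Data : Type) (CM : Agent)
  (M : msg Agent Data) (phi : form Agent Data) :
  LIiP CM (FImp (Fk CM M) (Fiff (FBox M phi) phi)).
Proof.
apply: LIiP_imp_and.
- exact/LIiP_imp_swap/ax_boxT.
- exact/LIiP_weaken/ax_boxI.
Qed.
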